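(* Let $f:F\to F'$ be a morphism of hyperfields, where $F$ is a topological hyperfield. Let $*\in\{s,w\}$ and $M\in\operatorname{Gr}^*(r,F'^n)$. Then the identity maps $$\operatorname{Real}^*_{{}_0F}(M)\to\operatorname{Real}^*_F(M)\to\operatorname{Real}^*_{F_0}(M)$$ are homeomorphisms.
   Context: Hyperfields. A hyperfield $(F,\odot,\boxplus,1,0)$ has the following data and axioms. - $\odot$ is a commutative multiplication and $\boxplus$ is a hyperaddition assigning to each $x,y$ a nonempty subset $x\boxplus y\subseteq F$ (extended to subsets by unions). - $\boxplus$ is commutative and associative, and $x\boxplus 0=\{x\}$. - Each $x$ has a unique $-x$ with $0\in x\boxplus(-x)$, and $x\in y\boxplus z \iff z\in x\boxplus(-y)$. - $(F\setminus\{0\},\odot,1)$ is an abelian group $F^\times$, $0\odot x=0$, and $x\odot(y\boxplus z)=(x\odot y)\boxplus(x\odot z)$. A homomorphism (morphism) $h$ satisfies $h(0)=0$, $h(1)=1$, $h(xy)=h(x)h(y)$ and $h(x\boxplus y)\subseteq h(x)\boxplus h(y)$. Topological hyperfields. A topological hyperfield is a hyperfield with a topology $T$ in which $F\setminus\{0\}$ is open, multiplication is continuous, and inversion on $F^\times$ is continuous. - ${}_0F$ is $F$ with the 0-fine topology: $V\subseteq F$ is open iff $V\setminus\{0\}\in T$. - $F_0$ is $F$ with the 0-coarse topology: the open sets are $F$ and all $U\in T$ with $0\notin U$. Grassmannians. A strong Grassmann–Plücker (GP) function of rank $r$ on $E=\{1,\dots,n\}$ is a function $\varphi:E^r\to F$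 with the following properties. - $\varphi$ is not identically $0$. - $\varphi$ is alternating. - For all $(i_1,\dots,i_{r+1})\in E^{r+1}$ and $(j_1,\dots,j_{r-1})\in E^{r-1}$: $$0\in\boxplus_{k=1}^{r+1}(-1)^k\varphi(i_1,\dots,\widehat{i_k},\dots,i_{r+1})\odot\varphi(i_k,j_1,\dots,j_{r-1}).$$ A weak GP function is a function $\varphi:E^r\to F$ with the following properties. - $\varphi$ is nonzero and alternating. - Its support is the set of bases of a matroid. - The relation holds whenever $|\{i\}\setminus\{j\}|=3$. $\operatorname{Gr}^s(r,F^n)$ and $\operatorname{Gr}^w(r,F^n)$ are the sets of classes of strong, resp. weak, GP functions modulo $\varphi\sim\alpha\varphi$, $\alpha\in F^\times$. For topological $F$ they have the subspace topology of $(F^{E^r}\setminus\{0\})/F^\times$, which carries the product and quotient topologies. Realization spaces. A morphism $f$ induces $\operatorname{Gr}^*(f):[\varphi]\mapsto[f\circ\varphi]$. For $M\in\operatorname{Gr}^*(r,F'^n)$, the realization space $\operatorname{Real}^*_F(M)=\operatorname{Gr}^*(f)^{-1}(M)\subseteq\operatorname{Gr}^*(r,F^n)$ has the subspace topology; the subscript indicates which topology on $F$ is used. *)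

From HB Require Import structures.
From mathcomp Require Import all_boot fingroup perm.
Set Implicit Arguments.
Unset Strict Implicit.
Unset Printing Implicit Defensive.

(* Hyperfields.  [hadd x y z] means  z ∈ x ⊞ y.                        *)
Record hyperfield := HyperField {
  hcar :> Type;
  hzero : hcar;
  hone : hcar;
  hmul : hcar -> hcar -> hcar;
  hadd : hcar -> hcar -> hcar -> Prop;
  hneg : hcar -> hcar;
  hinv : hcar -> hcar;
  hadd_nonempty : forall x y, exists z, hadd x y z;
  hadd_comm : forall x y z, hadd x y z -> hadd y x z;
  hadd_assoc : forall x y z t,
    (exists w, hadd x y w /\ hadd w z t) <-> (exists w, hadd y z w /\ hadd x w t);
  hadd_zero : forall x z, hadd x hzero z <-> z = x;
  hneg_spec : forall x, hadd x (hneg x) hzero;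
  hneg_unique : forall x y, hadd x y hzero -> y = hneg x;
  hadd_rev : forall x y z, hadd y z x <-> hadd x (hneg y) z;
  hone_neq0 : hone <> hzero;
  hmul_comm : forall x y, hmul x y = hmul y x;
  hmul_assoc : forall x y z, hmul x (hmul y z) = hmul (hmul x y) z;
  hmul_one : forall x, hmul hone x = x;
  hmul_closed : forall x y, x <> hzero -> y <> hzero -> hmul x y <> hzero;
  hmul_inv : forall x, x <> hzero -> hmul x (hinv x) = hone;
  hmul_zero : forall x, hmul hzero x = hzero;
  hdistr : forall x y z t,
    hadd (hmul x y) (hmul x z) t <-> exists u, hadd y z u /\ t = hmul x u
}.

Arguments hzero {h}.
Arguments hone {h}.

Record hmorph (F F' : hyperfield) := HMorph {
  hm :> F -> F';
  hm_zero : hm hzero = hzero;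
  hm_one : hm hone = hone;
  hm_mul : forall x y, hm (hmul x y) = hmul (hm x) (hm y);
  hm_add : forall x y z, hadd x y z -> hadd (hm x) (hm y) (hm z)
}.

Definition topology (X : Type) := (X -> Prop) -> Prop.

Definition is_topology (X : Type) (T : topology X) : Prop :=
  T (fun _ => True) /\
  (forall S : (X -> Prop) -> Prop, (forall U, S U -> T U) ->
     T (fun x => exists U, S U /\ U x)) /\
  (forall U V, T U -> T V -> T (fun x => U x /\ V x)).

Definition sub_top (X : Type) (T : topology X) (P : X -> Prop) : topology {x | P x} :=
  fun U => exists V, T V /\ forall x : {x | P x}, U x <-> V (proj1_sig x).

Definition quot_top (X Y : Type) (T : topology X) (q : X -> Y) : topology Y :=
  fun U => T (fun x => U (q x)).

Definition prodfun_top (I : finType) (X : Type) (T : topology X) : topology (I -> X) :=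
  fun W => forall f, W f -> exists V : I -> X -> Prop,
     (forall i, T (V i)) /\ (forall i, V i (f i)) /\
     (forall g, (forall i, V i (g i)) -> W g).

Definition prod2_top (X Y : Type) (TX : topology X) (TY : topology Y) : topology (X * Y) :=
  fun W => forall p, W p -> exists U V, TX U /\ TY V /\ U p.1 /\ V p.2 /\
     (forall a b, U a -> V b -> W (a, b)).

Arguments sub_top {X} T P.
Arguments quot_top {X Y} T q.
Arguments prodfun_top {I X} T.
Arguments prod2_top {X Y} TX TY.

Definition continuous (X Y : Type) (TX : topology X) (TY : topology Y) (h : X -> Y) :=
  forall U, TY U -> TX (fun x => U (h x)).

Definition homeomorphism (X Y : Type) (TX : topology X) (TY : topology Y) (h : X -> Y) :=
  exists g : Y -> X, (forall x, g (h x) = x) /\ (forall y, h (g y) = y) /\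
    continuous TX TY h /\ continuous TY TX g.

Arguments continuous {X Y} TX TY h.
Arguments homeomorphism {X Y} TX TY h.
Arguments is_topology {X} T.

Definition top_hyperfield (F : hyperfield) (T : topology F) : Prop :=
  is_topology T /\
  T (fun x => x <> hzero) /\
  continuous (prod2_top T T) T (fun p => hmul p.1 p.2) /\
  (* inversion F^x -> F^x continuous for the subspace topology on F^x *)
  (forall U, T U -> exists V, T V /\
     forall x : F, x <> hzero -> (U (hinv x) /\ hinv x <> hzero <-> V x)).

Definition fine_top (F : hyperfield) (T : topology F) : topology F :=
  fun V => T (fun x => V x /\ x <> hzero).

Definition coarse_top (F : hyperfield) (T : topology F) : topology F :=
  fun U => (forall x, U x) \/ (T U /\ ~ U hzero).

(* E = 'I_n ; E^r represented by {ffun 'I_r -> 'I_n}                   *)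
Definition idx (r n : nat) := {ffun 'I_r -> 'I_n}.

Section GP.
Variable F : hyperfield.

Fixpoint hpow (x : F) (k : nat) : F :=
  match k with 0 => hone | k.+1 => hmul x (hpow x k) end.

Fixpoint hsum (l : seq F) (t : F) : Prop :=
  match l with
  | [::] => t = hzero
  | a :: l' => exists s, hsum l' s /\ hadd a s t
  end.

Variables r n : nat.

Definition nonzero_fun (phi : idx r n -> F) := exists x, phi x <> hzero.

Definition alternating (phi : idx r n -> F) :=
  (forall (x : idx r n) (a b : 'I_r), a != b -> x a = x b -> phi x = hzero) /\
  (forall (x : idx r n) (s : 'S_r),
     phi [ffun m => x (s m)] = hmul (hpow (hneg hone) (odd_perm s)) (phi x)).

(* (i_1, ..., \hat{i_k}, ..., i_{r+1}) *)
Definition drop_at (i : idx r.+1 n) (k : 'I_r.+1) : idx r n :=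
  [ffun m => i (lift k m)].

(* (a, j_1, ..., j_{r-1}) *)
Definition cons_at (a : 'I_n) (j : idx r.-1 n) : idx r n :=
  [ffun m : 'I_r => match val m with
                   | 0 => a
                   | p.+1 => match (insub p : option 'I_r.-1) with
                             | Some q => j q
                             | None => a
                             end
                   end].

(* 0 ∈ ⊞_{k=1}^{r+1} (-1)^k φ(i without i_k) φ(i_k, j)  (k is 0-based here) *)
Definition GP_relation (phi : idx r n -> F) (i : idx r.+1 n) (j : idx r.-1 n) :=
  hsum [seq hmul (hmul (hpow (hneg hone) (val k).+1) (phi (drop_at i k)))
                 (phi (cons_at (i k) j)) | k : 'I_r.+1 <- enum 'I_r.+1] hzero.

Definition strong_GP (phi : idx r n -> F) :=
  nonzero_fun phi /\ alternating phi /\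
  (0 < r -> forall i j, GP_relation phi i j).

Definition matroid_bases (B : {set 'I_n} -> Prop) :=
  (exists b, B b) /\
  (forall B1 B2 x, B B1 -> B B2 -> x \in B1 :\: B2 ->
     exists2 y, y \in B2 :\: B1 & B (y |: (B1 :\ x))).

Definition support_sets (phi : idx r n -> F) (b : {set 'I_n}) :=
  exists x : idx r n, phi x <> hzero /\ b = [set x k | k : 'I_r].

Definition weak_GP (phi : idx r n -> F) :=
  nonzero_fun phi /\ alternating phi /\
  matroid_bases (support_sets phi) /\
  (0 < r -> forall (i : idx r.+1 n) (j : idx r.-1 n),
     #|[set i k | k : 'I_r.+1] :\: [set j k | k : 'I_r.-1]| = 3 ->
     GP_relation phi i j).

End GP.

Inductive gp_kind := Strong | Weak.

Definition is_GP (kind : gp_kind) (F : hyperfield) (r n : nat) (phi : idx r n -> F) :=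
  match kind with Strong => strong_GP phi | Weak => weak_GP phi end.

Section Grass.
Variables (F : hyperfield) (r n : nat).

Definition cls (phi : idx r n -> F) : (idx r n -> F) -> Prop :=
  fun psi => exists alpha : F, alpha <> hzero /\ forall x, psi x = hmul alpha (phi x).

Definition NZ := {phi : idx r n -> F | nonzero_fun phi}.

Definition QT := {c : (idx r n -> F) -> Prop | exists phi : NZ, c = cls (proj1_sig phi)}.

Definition qmap (phi : NZ) : QT :=
  exist _ (cls (proj1_sig phi)) (ex_intro _ phi erefl).

Definition Q_top (T : topology F) : topology QT :=
  quot_top (sub_top (@prodfun_top (idx r n) F T) (@nonzero_fun F r n)) qmap.

Definition GrP (kind : gp_kind) (c : QT) :=
  exists phi, is_GP kind phi /\ proj1_sig c = cls phi.

Definition GrT (kind : gp_kind) := {c : QT | GrP kind c}.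

Definition Gr_top (kind : gp_kind) (T : topology F) : topology (GrT kind) :=
  sub_top (Q_top T) (GrP kind).

End Grass.

Section Real.
Variables (F F' : hyperfield) (f : hmorph F F') (kind : gp_kind) (r n : nat)
          (M : GrT F' r n kind).

(* c ∈ Gr^*(f)^{-1}(M),  Gr^*(f)[phi] = [f ∘ phi] *)
Definition RealP (c : GrT F r n kind) :=
  exists phi : idx r n -> F,
    proj1_sig (proj1_sig c) = cls phi /\
    proj1_sig (proj1_sig M) = cls (fun x => f (phi x)).

Definition RealT := {c : GrT F r n kind | RealP c}.

Definition Real_top (T : topology F) : topology RealT :=
  sub_top (@Gr_top F r n kind T) RealP.

End Real.

Arguments RealT {F F'} f {kind r n} M.
Arguments Real_top {F F'} f {kind r n} M T.
Arguments RealP {F F'} f {kind r n} M c.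

From HB Require Import structures.
From mathcomp Require Import all_boot fingroup perm.
From Stdlib Require Import Classical ClassicalDescription FunctionalExtensionality PropExtensionality ProofIrrelevance.
Set Implicit Arguments.
Unset Strict Implicit.
Unset Printing Implicit Defensive.

(* A morphism of hyperfields maps only 0 to 0, so every point of Real(M) has
   the zero pattern Z of M.  Hence an open set of the realization space only
   ever sees GP functions that vanish exactly on Z: replacing each coordinate
   neighbourhood outside Z by its punctured version, and inside Z by the whole
   of F, does not change it.  The punctured sets are open in the 0-coarse
   topology and the original ones are open in the 0-fine topology, so all
   three topologies on F induce the same topology on Real(M). *)

Section HyperfieldFacts.
Variable F : hyperfield.
Implicit Types x : F.

Lemma hmulr0 x : hmul x hzero = hzero.
Proof. by rewrite hmul_comm hmul_zero. Qed.

Lemma hinv_neq0 x : x <> hzero -> hinv x <> hzero.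
Proof.
move=> x_neq0 inv_eq0; apply: (@hone_neq0 F).
by rewrite -(hmul_inv x_neq0) inv_eq0 hmulr0.
Qed.

End HyperfieldFacts.

Lemma hmorph_eq0 (F F' : hyperfield) (f : hmorph F F') (x : F) :
  f x = hzero <-> x = hzero.
Proof.
split=> [fx_eq0 | ->]; last exact: hm_zero.
apply: NNPP => x_neq0; apply: (@hone_neq0 F').
by rewrite -(hm_one f) -(hmul_inv x_neq0) hm_mul fx_eq0 hmul_zero.
Qed.

Section ZeroOut.
Variables (I X : Type) (x0 : X) (Z : I -> Prop).

Definition zero_out (g : I -> X) : I -> X :=
  fun i => if excluded_middle_informative (Z i) then x0 else g i.

Definition nonzero_off (g : I -> X) := forall i, ~ Z i -> g i <> x0.

Lemma zero_out_id (g : I -> X) : (forall i, Z i -> g i = x0) -> zero_out g = g.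
Proof.
move=> gZ; apply: functional_extensionality => i; rewrite /zero_out.
by case: excluded_middle_informative => // Zi; rewrite gZ.
Qed.

Lemma zero_out_off (g : I -> X) i : ~ Z i -> zero_out g i = g i.
Proof. by rewrite /zero_out; case: excluded_middle_informative. Qed.

End ZeroOut.

Section ProductTopology.
Variables (I : finType) (X : Type).

Lemma prodfun_top_mono (T1 T2 : topology X) :
  (forall V, T1 V -> T2 V) -> forall W, prodfun_top T1 W -> prodfun_top (I:=I) T2 W.
Proof.
move=> T12 W W_open g Wg; have [V [V_open [Vg VW]]] := W_open g Wg.
by exists V; split=> // i; apply: T12.
Qed.

Variables (x0 : X) (T1 T2 : topology X).
Hypothesis T2_full : T2 (fun _ => True).
Hypothesis T2_punctured : forall V, T1 V -> T2 (fun y => V y /\ y <> x0).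

(* The neighbourhood of [g] is [V i] punctured at [x0] off [Z], and everything on [Z]. *)
Lemma prodfun_top_zero_out (Z : I -> Prop) (O : (I -> X) -> Prop) :
  prodfun_top T1 O ->
  prodfun_top T2 (fun g => nonzero_off x0 Z g /\ O (zero_out x0 Z g)).
Proof.
move=> O_open g [g_off Og]; have [V [V_open [Vg VO]]] := O_open _ Og.
exists (fun i y => ~ Z i -> V i y /\ y <> x0); split; [|split].
- move=> i; case: (classic (Z i)) => [Zi | nZi].
  + have -> : (fun y => ~ Z i -> V i y /\ y <> x0) = (fun _ => True) by
      apply: functional_extensionality => y; apply: propositional_extensionality.
    exact: T2_full.
  + have -> : (fun y => ~ Z i -> V i y /\ y <> x0) = (fun y => V i y /\ y <> x0) by
      apply: functional_extensionality => y; apply: propositional_extensionality; tauto.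
    exact: T2_punctured.
- move=> i nZi; split; last exact: g_off.
  by have := Vg i; rewrite zero_out_off.
- move=> h Vh; split=> [i /Vh [] //|]; apply: VO => i.
  have := Vg i; rewrite /zero_out.
  by case: (excluded_middle_informative (Z i)) => // nZi _; case: (Vh i nZi).
Qed.

End ProductTopology.

Section Quotient.
Variables (F : hyperfield) (r n : nat).
Implicit Types (phi psi g : idx r n -> F) (al : F).

Definition scale al g : idx r n -> F := fun x => hmul al (g x).

Lemma cls_refl phi : cls phi phi.
Proof. by exists hone; split=> [|x]; [exact: hone_neq0 | rewrite hmul_one]. Qed.

Lemma cls_eq_scale phi psi : cls phi = cls psi -> exists2 al, al <> hzero & psi = scale al phi.
Proof.
move=> E; have [al [al_neq0 psiE]] : cls phi psi by rewrite E; apply: cls_refl.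
by exists al => //; apply: functional_extensionality.
Qed.

Lemma cls_scale phi al : al <> hzero -> cls (scale al phi) = cls phi.
Proof.
move=> al_neq0; apply: functional_extensionality => psi.
apply: propositional_extensionality; split=> -[be [be_neq0 psiE]].
- exists (hmul be al); split; first exact: hmul_closed.
  by move=> x; rewrite psiE hmul_assoc.
- exists (hmul be (hinv al)); split; first exact: hmul_closed (hinv_neq0 _).
  move=> x; rewrite psiE /scale -hmul_assoc (hmul_assoc (hinv al)).
  by rewrite (hmul_comm (hinv al)) hmul_inv // hmul_one.
Qed.

Lemma nonzero_scale g al : nonzero_fun g -> al <> hzero -> nonzero_fun (scale al g).
Proof. by case=> x gx al_neq0; exists x; apply: hmul_closed. Qed.

Lemma qmap_eq (q : QT F r n) (x : NZ F r n) : proj1_sig q = cls (proj1_sig x) -> q = qmap x.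
Proof. by case: q => c c_cls /= E; subst c; congr exist; apply: proof_irrelevance. Qed.

Lemma qmap_scale g al (g_nz : nonzero_fun g) (al_neq0 : al <> hzero) :
  qmap (exist _ g g_nz) = qmap (exist _ _ (nonzero_scale g_nz al_neq0)).
Proof. by apply: qmap_eq; rewrite /= cls_scale. Qed.

Definition scale_invariant (O : (idx r n -> F) -> Prop) :=
  forall g al, nonzero_fun g -> al <> hzero -> O g -> O (scale al g).

Lemma qmap_preimage_scale_invariant (W : QT F r n -> Prop) O :
  (forall x : NZ F r n, W (qmap x) <-> O (proj1_sig x)) -> scale_invariant O.
Proof.
move=> WO g al g_nz al_neq0 Og.
apply/(WO (exist _ _ (nonzero_scale g_nz al_neq0))).
by rewrite -qmap_scale; apply/(WO (exist _ _ g_nz)).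
Qed.

Definition cls_image (O : (idx r n -> F) -> Prop) : QT F r n -> Prop :=
  fun q => exists x : NZ F r n, q = qmap x /\ O (proj1_sig x).

Lemma cls_imageE O : scale_invariant O ->
  forall x : NZ F r n, cls_image O (qmap x) <-> O (proj1_sig x).
Proof.
move=> O_inv x; split=> [[y [xy Oy]] | Ox]; last by exists x.
have [al al_neq0 ->] := cls_eq_scale (esym (f_equal (@proj1_sig _ _) xy)).
exact: O_inv (proj2_sig y) al_neq0 Oy.
Qed.

Lemma Q_top_cls_image (T : topology F) O :
  prodfun_top T O -> scale_invariant O -> Q_top T (cls_image O).
Proof. by move=> O_open O_inv; exists O; split=> //; apply: cls_imageE. Qed.

Lemma scale_invariant_zero_out (Z : idx r n -> Prop) O : (exists i, ~ Z i) ->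
  scale_invariant O ->
  scale_invariant (fun g => nonzero_off hzero Z g /\ O (zero_out hzero Z g)).
Proof.
move=> [i0 nZi0] O_inv g al _ al_neq0 [g_off Og]; split.
  by move=> i nZi; apply: hmul_closed => //; apply: g_off.
have -> : zero_out hzero Z (scale al g) = scale al (zero_out hzero Z g).
  apply: functional_extensionality => i; rewrite /zero_out /scale.
  by case: (excluded_middle_informative (Z i)) => /=; rewrite ?hmulr0.
apply: O_inv al_neq0 Og; exists i0.
by rewrite zero_out_off //; apply: g_off.
Qed.

End Quotient.

Lemma cls_hmorph_zero (F F' : hyperfield) (f : hmorph F F') r n
    (phi : idx r n -> F) (psi : idx r n -> F') :
  cls psi = cls (fun x => f (phi x)) -> forall i, phi i = hzero <-> psi i = hzero.
Proof.
move=> /cls_eq_scale [al al_neq0 fphiE] i.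
rewrite -(hmorph_eq0 f) (congr1 (fun h => h i) fphiE) /scale.
split=> [E | ->]; last exact: hmulr0.
by apply: NNPP => psi_neq0; apply: (hmul_closed al_neq0 psi_neq0).
Qed.

Lemma homeomorphism_id (X : Type) (T1 T2 : topology X) :
  (forall U, T1 U -> T2 U) -> (forall U, T2 U -> T1 U) -> homeomorphism T1 T2 (fun x => x).
Proof. by move=> T12 T21; exists (fun x => x). Qed.

Section Realization.
Variables (F F' : hyperfield) (f : hmorph F F') (kind : gp_kind) (r n : nat)
          (M : GrT F' r n kind).

Lemma Real_topE (T : topology F) (U : RealT f M -> Prop) :
  Real_top f M T U <->
  exists W, Q_top T W /\ forall c, U c <-> W (proj1_sig (proj1_sig c)).
Proof.
split=> [[V [[W [W_open VW]] UV]] | [W [W_open UW]]].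
  by exists W; split=> // c; rewrite UV VW.
by exists (fun g => W (proj1_sig g)); split=> //; exists W.
Qed.

Lemma Real_top_mono (T1 T2 : topology F) : (forall V, T1 V -> T2 V) ->
  forall U, Real_top f M T1 U -> Real_top f M T2 U.
Proof.
move=> T12 U /Real_topE [W [[O [O_open WO]] UW]].
by apply/Real_topE; exists W; split=> //; exists O; split=> //; apply: prodfun_top_mono O_open.
Qed.

Lemma Real_top_puncture (T1 T2 : topology F) :
  T2 (fun _ => True) -> (forall V, T1 V -> T2 (fun y => V y /\ y <> hzero)) ->
  forall U, Real_top f M T1 U -> Real_top f M T2 U.
Proof.
move=> T2_full T2_punctured U /Real_topE [W [[O [O_open WO]] UW]].
have [[phiM phiM_nz] /= ME] := proj2_sig (proj1_sig M).
pose Z i := phiM i = hzero.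
pose O2 g := nonzero_off hzero Z g /\ O (zero_out hzero Z g).
have O2_inv : scale_invariant O2.
  apply: scale_invariant_zero_out; last exact: qmap_preimage_scale_invariant WO.
  by case: phiM_nz => i; exists i.
apply/Real_topE; exists (cls_image O2); split.
  exact: Q_top_cls_image (prodfun_top_zero_out T2_full T2_punctured (Z := Z) O_open) O2_inv.
move=> [[q ?] [phi [qE fphiE]]] /=.
have phiZ : forall i, phi i = hzero <-> Z i.
  by apply: (cls_hmorph_zero (f := f)); rewrite -ME; exact: fphiE.
have phi_nz : nonzero_fun phi by case: phiM_nz => i; exists i => /phiZ.
rewrite UW /=; have -> : q = qmap (exist _ phi phi_nz) by apply: qmap_eq; exact: qE.
rewrite cls_imageE // WO /= /O2.
rewrite zero_out_id => [|i /phiZ //]; split=> [Ophi | [] //].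
by split=> // i nZi /phiZ.
Qed.

End Realization.

Theorem corollary5p2 (F F' : hyperfield) (f : hmorph F F') (T : topology F)
  (HT : top_hyperfield T) (kind : gp_kind) (r n : nat) (M : GrT F' r n kind) :
  homeomorphism (Real_top f M (fine_top T)) (Real_top f M T) (fun c => c) /\
  homeomorphism (Real_top f M T) (Real_top f M (coarse_top T)) (fun c => c).
Proof.
case: HT => [[T_full [_ T_cap]] [T_nonzero _]].
have T_fine : forall V, T V -> fine_top T V by move=> V TV; apply: T_cap TV T_nonzero.
have coarse_T : forall V, coarse_top T V -> T V.
  move=> V [V_full | [] //]; suff -> : V = (fun _ => True) by [].
  by apply: functional_extensionality => y; apply: propositional_extensionality.
split; apply: homeomorphism_id.
- exact: Real_top_puncture.
- exact: Real_top_mono.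
- apply: Real_top_puncture; first by left.
  by move=> V TV; right; split; [exact: T_cap TV T_nonzero | case].
- exact: Real_top_mono.
Qed.
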